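(* Suppose $f$ satisfies Assumption 1, $u_c$ satisfies Assumption 2, and $U:\mathbb{R}^n\times[0,\infty)\to\mathbb{R}^m$ is StL. Then $\bar F^E_U$ is EPC with $\bar F^e_U$, where $\bar F^E_U(x,T):=x+Tf(x,U(x,T))$ and $\bar F^e_U(x,T):=F^e(x,U(x,T),T)$.
   Context: Assumption 1: $f(0,0)=0$ and for every $M,M_u\ge0$ there is $L>0$ with $|f(x,u)-f(y,v)|\le L(|x-y|+|u-v|)$ for $|x|,|y|\le M$, $|u|,|v|\le M_u$. Assumption 2: $u_c(0)=0$ and for every $M\ge0$ there is $L>0$ with $|u_c(x)-u_c(y)|\le L|x-y|$ for $|x|,|y|\le M$. $F^e(x,u,T)$: time-$T$ value of the solution of $\dot z=f(z,u)$ with constant $u$ and $z(0)=x$. StL: for each $M\ge0$ there exist $K(M)>0$, $T^*(M)>0$ ($T^*$ nonincreasing) with $U(0,T)=0$ and $|U(x,T)-U(y,T)|\le K|x-y|$ for $|x|,|y|\le M$, $T\in[0,T^* )$. EPC: $\bar F^a$ is EPC with $\bar F^b$ if for each $M\ge0$ there exist $K(M)>0$, $T^*(M)>0$, $\rho\in\mathcal{K}_\infty$ with $|\bar F^a(x,T)-\bar F^b(y,T)|\le(1+KT)|x-y|+T\rho(T)\max\{|x|,|y|\}$ for all $|x|,|y|\le M$, $T\in(0,T^* )$. *)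

From HB Require Import structures.
From mathcomp Require Import all_boot all_order all_algebra.
From mathcomp Require Import all_classical all_reals all_analysis.
Set Implicit Arguments. Unset Strict Implicit. Unset Printing Implicit Defensive.
Import Order.TTheory GRing.Theory Num.Theory.
Import numFieldNormedType.Exports.
Local Open Scope classical_set_scope.
Local Open Scope ring_scope.

Section Defs.
Variable R : realType.

Definition enorm (n : nat) (v : 'rV[R]_n) : R := Num.sqrt (\sum_(i < n) v 0 i ^+ 2).

Definition assumption1 (n m : nat) (f : 'rV[R]_n -> 'rV[R]_m -> 'rV[R]_n) : Prop :=
  f 0 0 = 0 /\
  forall M Mu : R, 0 <= M -> 0 <= Mu -> exists L : R, 0 < L /\
    forall (x y : 'rV[R]_n) (u v : 'rV[R]_m),
      enorm x <= M -> enorm y <= M -> enorm u <= Mu -> enorm v <= Mu ->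
      enorm (f x u - f y v) <= L * (enorm (x - y) + enorm (u - v)).

Definition assumption2 (n m : nat) (uc : 'rV[R]_n -> 'rV[R]_m) : Prop :=
  uc 0 = 0 /\
  forall M : R, 0 <= M -> exists L : R, 0 < L /\
    forall x y : 'rV[R]_n, enorm x <= M -> enorm y <= M ->
      enorm (uc x - uc y) <= L * enorm (x - y).

Definition StL (n m : nat) (U : 'rV[R]_n -> R -> 'rV[R]_m) : Prop :=
  exists K Tstar : R -> R,
    (forall M1 M2, 0 <= M1 -> M1 <= M2 -> Tstar M2 <= Tstar M1) /\
    forall M : R, 0 <= M ->
      0 < K M /\ 0 < Tstar M /\
      forall T : R, 0 <= T -> T < Tstar M ->
        U 0 T = 0 /\
        forall x y : 'rV[R]_n, enorm x <= M -> enorm y <= M ->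
          enorm (U x T - U y T) <= K M * enorm (x - y).

Definition class_Kinf (rho : R -> R) : Prop :=
  {within [set t | 0 <= t], continuous rho} /\
  rho 0 = 0 /\
  (forall a b : R, 0 <= a -> a < b -> rho a < rho b) /\
  (forall r : R, exists s : R, 0 <= s /\ r < rho s).

Definition EPC (n : nat) (Fa Fb : 'rV[R]_n -> R -> 'rV[R]_n) : Prop :=
  forall M : R, 0 <= M -> exists (K Tstar : R) (rho : R -> R),
    0 < K /\ 0 < Tstar /\ class_Kinf rho /\
    forall (x y : 'rV[R]_n) (T : R), enorm x <= M -> enorm y <= M ->
      0 < T -> T < Tstar ->
      enorm (Fa x T - Fb y T) <=
        (1 + K * T) * enorm (x - y) + T * rho T * Num.max (enorm x) (enorm y).

Definition ode_sol (n m : nat) (f : 'rV[R]_n -> 'rV[R]_m -> 'rV[R]_n)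
    (x : 'rV[R]_n) (u : 'rV[R]_m) (T : R) (z : R -> 'rV[R]_n) : Prop :=
  z 0 = x /\
  {within [set t | 0 <= t <= T], continuous z} /\
  forall t : R, 0 < t -> t < T -> is_derive t (1 : R) z (f (z t) u).

(* Fe is the exact time-T map F^e: its value is z(T) whenever a solution
   on [0,T] exists (unique by local Lipschitzness). *)
Definition exact_map (n m : nat) (f : 'rV[R]_n -> 'rV[R]_m -> 'rV[R]_n)
    (Fe : 'rV[R]_n -> 'rV[R]_m -> R -> 'rV[R]_n) : Prop :=
  forall x u T z, 0 <= T -> ode_sol f x u T z -> Fe x u T = z T.

Definition FbarE (n m : nat) (f : 'rV[R]_n -> 'rV[R]_m -> 'rV[R]_n)
    (U : 'rV[R]_n -> R -> 'rV[R]_m) : 'rV[R]_n -> R -> 'rV[R]_n :=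
  fun x T => x + T *: f x (U x T).

Definition Fbare (n m : nat) (Fe : 'rV[R]_n -> 'rV[R]_m -> R -> 'rV[R]_n)
    (U : 'rV[R]_n -> R -> 'rV[R]_m) : 'rV[R]_n -> R -> 'rV[R]_n :=
  fun x T => Fe x (U x T) T.

End Defs.

From HB Require Import structures.
From mathcomp Require Import all_boot all_order all_algebra.
From mathcomp Require Import all_classical all_reals all_analysis.
From mathcomp Require Import ring lra.
Set Implicit Arguments. Unset Strict Implicit. Unset Printing Implicit Defensive.
Import Order.TTheory GRing.Theory Num.Theory.
Import numFieldNormedType.Exports.
Local Open Scope classical_set_scope.
Local Open Scope ring_scope.

(* The error splits through the Euler step from [y]:
   |F^E(x) - F^e(y)| <= |F^E(x) - F^E(y)| + |F^E(y) - F^e(y)|.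
   The first term is at most (1 + L (1 + K) T) |x - y| by the local Lipschitz bounds on f
   and U.  For the second, U(0,T) = 0 and f(0,0) = 0 make the field f(., U(y,T)) of size
   O(|y|) on a box of radius |y| around y; clamping it to that box gives a globally
   Lipschitz bounded field, whose Picard iterates converge for small T to a solution that
   never leaves the box.  Its integral form bounds |z(T) - y - T f(y,u)| by
   T * L * (T * O(|y|)), so rho can be taken linear. *)

Lemma lipschitz_continuous {R : realType} (V W : normedModType R) (f : V -> W) (k : R) :
  (forall a b, `|f a - f b| <= k * `|a - b|) -> continuous f.
Proof.
move=> fk x; apply/cvgrPdist_lt => e e0.
have k1 : 0 < `|k| + 1 by rewrite ltr_wpDl.
near=> z; apply: le_lt_trans (fk x z) _.
apply: (@le_lt_trans _ _ ((`|k| + 1) * `|x - z|)).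
  by apply: ler_wpM2r => //; rewrite (le_trans (ler_norm k)) // lerDl.
rewrite -ltr_pdivlMl //; near: z.
by apply: cvgr_dist_lt; [exact: cvg_id | rewrite mulr_gt0 // invr_gt0].
Unshelve. all: by end_near. Qed.

Section RowMaxNorm.
Context {R : realType} (n : nat).
Implicit Types (v : 'rV[R]_n).

Lemma row_entry_le_normr v j : `|v 0 j| <= `|v|.
Proof. by rewrite [leRHS]/Num.Def.normr /= mx_normrE; exact: (le_bigmax _ _ (0, j)). Qed.

Lemma normr_row_le v (C : R) : 0 <= C -> (forall j, `|v 0 j| <= C) -> `|v| <= C.
Proof.
move=> C0 vC; rewrite [leLHS]/Num.Def.normr /= mx_normrE.
by apply: bigmax_le => // -[i j] _; rewrite (ord1 i).
Qed.

End RowMaxNorm.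

Section EuclideanNorm.
Context {R : realType} (n : nat).
Implicit Types (u v : 'rV[R]_n).

Lemma sumsqr_ge0 v : 0 <= \sum_(i < n) v 0 i ^+ 2.
Proof. by apply: sumr_ge0 => i _; exact: sqr_ge0. Qed.

Lemma enorm_ge0 v : 0 <= enorm v.
Proof. exact: sqrtr_ge0. Qed.

Lemma enorm_sqr v : enorm v ^+ 2 = \sum_(i < n) v 0 i ^+ 2.
Proof. by rewrite sqr_sqrtr // sumsqr_ge0. Qed.

Lemma enorm_eq0 v : enorm v = 0 -> v = 0.
Proof.
move=> v0; have /psumr_eq0P vi0 : \sum_(i < n) v 0 i ^+ 2 = 0.
  by rewrite -enorm_sqr v0 expr0n.
apply/rowP => j; apply/eqP; rewrite mxE -sqrf_eq0; apply/eqP/vi0 => // i _.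
exact: sqr_ge0.
Qed.

Lemma enormZ (a : R) v : enorm (a *: v) = `|a| * enorm v.
Proof.
rewrite /enorm -sqrtr_sqr -sqrtrM ?sqr_ge0 // mulr_sumr.
by congr Num.sqrt; apply: eq_bigr => i _; rewrite mxE exprMn.
Qed.

Lemma enormN v : enorm (- v) = enorm v.
Proof. by rewrite -scaleN1r enormZ normrN normr1 mul1r. Qed.

Lemma enorm0 : enorm (0 : 'rV[R]_n) = 0.
Proof. by rewrite -(scale0r (0 : 'rV[R]_n)) enormZ normr0 mul0r. Qed.

Lemma dotr_le_enorm u v : \sum_(i < n) u 0 i * v 0 i <= enorm u * enorm v.
Proof.
have [/eqP|ab_neq0] := eqVneq (enorm u * enorm v) 0.
  rewrite mulf_eq0 => /orP[] /eqP/enorm_eq0 ->; rewrite enorm0 ?mul0r ?mulr0;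
    by rewrite big1 // => i _; rewrite mxE ?mul0r ?mulr0.
set a := enorm u; set b := enorm v; set S := \sum_(i < n) _.
have ab_gt0 : 0 < 2 * (a * b).
  by rewrite mulr_gt0 // lt_def ab_neq0 mulr_ge0 ?enorm_ge0.
(* termwise AM-GM: [2 a b u_i v_i <= b^2 u_i^2 + a^2 v_i^2] *)
have amgm : 2 * (a * b) * S <= \sum_(i < n) (b ^+ 2 * u 0 i ^+ 2 + a ^+ 2 * v 0 i ^+ 2).
  rewrite mulr_sumr; apply: ler_sum => i _; rewrite -subr_ge0.
  have -> : b ^+ 2 * u 0 i ^+ 2 + a ^+ 2 * v 0 i ^+ 2 - 2 * (a * b) * (u 0 i * v 0 i)
    = (b * u 0 i - a * v 0 i) ^+ 2 by ring.
  exact: sqr_ge0.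
rewrite big_split /= -!mulr_sumr -!enorm_sqr -/a -/b in amgm.
rewrite -(ler_pM2l ab_gt0); apply: le_trans amgm _.
by rewrite [leRHS](_ : _ = b ^+ 2 * a ^+ 2 + a ^+ 2 * b ^+ 2) //; ring.
Qed.

Lemma enormD u v : enorm (u + v) <= enorm u + enorm v.
Proof.
rewrite -(ler_pXn2r (n:=2)) ?nnegrE ?addr_ge0 ?enorm_ge0 // enorm_sqr.
have -> : \sum_(i < n) (u + v) 0 i ^+ 2 =
    enorm u ^+ 2 + enorm v ^+ 2 + 2 * \sum_(i < n) u 0 i * v 0 i.
  rewrite !enorm_sqr mulr_sumr -!big_split /=.
  by apply: eq_bigr => i _; rewrite mxE; ring.
have -> : (enorm u + enorm v) ^+ 2 = enorm u ^+ 2 + enorm v ^+ 2 + 2 * (enorm u * enorm v).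
  by ring.
by rewrite lerD2l ler_wpM2l // dotr_le_enorm.
Qed.

Lemma normr_le_enorm v : `|v| <= enorm v.
Proof.
apply: normr_row_le (enorm_ge0 v) _ => j.
rewrite -sqrtr_sqr ler_sqrt ?sumsqr_ge0 // (bigD1 j) //= lerDl.
by apply: sumr_ge0 => i _; exact: sqr_ge0.
Qed.

Lemma enorm_le_normr v : enorm v <= n.+1%:R * `|v|.
Proof.
rewrite -(ler_pXn2r (n:=2)) ?nnegrE ?mulr_ge0 ?enorm_ge0 // enorm_sqr.
apply: le_trans (_ : \sum_(i < n) `|v| ^+ 2 <= _).
  apply: ler_sum => i _; rewrite -real_normK ?num_real //.
  by rewrite lerXn2r ?nnegrE ?normr_ge0 // row_entry_le_normr.
rewrite sumr_const card_ord -[_ *+ n]mulr_natl exprMn; apply: ler_wpM2r; first exact: sqr_ge0.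
by rewrite -natrX ler_nat expnS expn1 (leq_trans (leqnSn n)) // leq_pmulr.
Qed.

End EuclideanNorm.

Section Clamp.
Context {R : realType}.
Implicit Types (a b x y : R).

Definition clamp a b x := Num.min (Num.max x a) b.

Lemma clamp_cases a b x : a <= b ->
  [\/ x <= a /\ clamp a b x = a, a <= x <= b /\ clamp a b x = x
    | b <= x /\ clamp a b x = b].
Proof.
move=> ab; rewrite /clamp; have [xa|ax] := leP x a; first by apply: Or31; rewrite min_l.
have [xb|bx] := leP x b; first by apply: Or32; rewrite (ltW ax).
by apply: Or33; rewrite (ltW bx).
Qed.

Lemma clamp_id a b x : a <= x <= b -> clamp a b x = x.
Proof.
move=> /andP[ax xb]; have ab := le_trans ax xb.
by case: (clamp_cases x ab) => -[hx ->] //; apply/eqP; rewrite eq_le; apply/andP; split; lra.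
Qed.

Lemma clamp_itv a b x : a <= b -> a <= clamp a b x <= b.
Proof. by move=> ab; case: (clamp_cases x ab) => -[hx ->]; apply/andP; split; lra. Qed.

Lemma clamp_dist a b x y : a <= b -> `|clamp a b x - clamp a b y| <= `|x - y|.
Proof.
move=> ab; rewrite ler_norml.
have := ler_norm (x - y); have := ler_norm (y - x); rewrite distrC.
by case: (clamp_cases x ab) => -[hx ->]; case: (clamp_cases y ab) => -[hy ->];
  move=> h1 h2; apply/andP; split; lra.
Qed.

End Clamp.

Section Primitive.
Context {R : realType}.
Notation mu := (@lebesgue_measure R).
Implicit Types (h : R -> R).

Definition primitive h t := \int[mu]_(s in `[0, t]) h s.

Lemma lebesgue_measure_itv_fine (a b : R) (la : bool) : a <= b ->
  fine (mu [set` Interval (BSide la a) (BRight b)]) = b - a.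
Proof.
move=> ab; rewrite lebesgue_measure_itv /= lte_fin; case: ltP => // ba.
have -> : b = a by apply/eqP; rewrite eq_le ba ab.
by rewrite subrr.
Qed.

Lemma continuous_integrable_itv h (i : interval R) (a b : R) : [set` i] `<=` `[a, b] ->
  continuous h -> mu.-integrable [set` i] (EFin \o h).
Proof.
move=> iab ch.
have hab : mu.-integrable `[a, b] (EFin \o h).
  apply: continuous_compact_integrable; first exact: segment_compact.
  exact: continuous_subspaceT.
by apply: integrableS hab => //; exact: measurable_itv.
Qed.

Lemma primitive0 h : primitive h 0 = 0.
Proof. by rewrite /primitive set_itv1 Rintegral_set1. Qed.

Lemma primitiveB h1 h2 (t : R) : continuous h1 -> continuous h2 ->
  primitive (h1 \- h2) t = primitive h1 t - primitive h2 t.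
Proof.
by move=> c1 c2; rewrite /primitive RintegralB //;
  apply: (@continuous_integrable_itv _ _ 0 t).
Qed.

Lemma primitive_cst c (t : R) : 0 <= t -> primitive (cst c) t = c * t.
Proof.
by move=> t0; rewrite /primitive Rintegral_cst // (lebesgue_measure_itv_fine true) ?subr0.
Qed.

Lemma primitive_dist h (C a b : R) : continuous h -> (forall s, `|h s| <= C) ->
  0 <= a -> 0 <= b -> `|primitive h b - primitive h a| <= C * `|b - a|.
Proof.
move=> ch hC; wlog ab : a b / a <= b => [wlog_ab a0 b0|a0 b0].
  by case: (leP a b) => [|/ltW] ab; last rewrite distrC (distrC b); exact: wlog_ab.
have sab : `]a, b] `<=` `[0, b] by apply: subset_itvr; rewrite bnd_simp.
have hi := continuous_integrable_itv sab ch.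
rewrite /primitive Rintegral_itvB ?bnd_simp //; last first.
  exact: (@continuous_integrable_itv _ _ 0 b).
apply: le_trans (le_normr_Rintegral _ hi) _ => //.
rewrite ger0_norm ?subr_ge0 // -(lebesgue_measure_itv_fine false ab) -Rintegral_cst //.
apply: le_Rintegral => //; first exact: integrable_norm.
exact: (continuous_integrable_itv sab (@cst_continuous _ _ C)).
Qed.

Lemma is_derive_primitive h (t : R) : continuous h -> 0 < t ->
  is_derive t 1 (primitive h) (h t).
Proof.
move=> ch t0; have t1 : t < t + 1 by rewrite ltrDl.
have [dI <-] := @continuous_FTC1_closed R h 0 t (t + 1) t1
  (@continuous_integrable_itv _ `[0, t + 1] 0 (t + 1) (@subset_refl _ _) ch) t0 (ch t).
by rewrite derive1E; exact: derivableP.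
Qed.

End Primitive.

(* Row vectors carry a complete and a normed-module structure, but the library does not
   declare their join. *)
HB.instance Definition _ (R : realType) (n : nat) := Complete.on 'rV[R]_n.

Section HalvingIncrements.
Context {R : realType}.
Local Notation q := (2^-1 : R).

Let q_ge0 : 0 <= q. Proof. by rewrite invr_ge0. Qed.

Lemma le0_geometric_half (x C : R) : (forall k, x <= C * q ^+ k) -> x <= 0.
Proof.
move=> xC; have q1 : `|q| < 1 by rewrite ger0_norm ?q_ge0 // invf_lt1 // ltr1n.
have g0 := cvg_geometric C q1; rewrite -(cvg_lim _ g0) //.
by apply: limr_ge; [exact: cvgP g0 | exact: nearW].
Qed.

Lemma cvg_dist_le (V : normedModType R) (u : nat -> V) (l a : V) (C : R) :
  u @ \oo --> l -> (\forall k \near \oo, `|u k - a| <= C) -> `|l - a| <= C.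
Proof.
move=> ul uC; have h : (fun k => `|u k - a|) @ \oo --> `|l - a|.
  by apply: cvg_norm; apply: cvgB => //; exact: cvg_cst.
by rewrite -(cvg_lim _ h) //; apply: limr_le => //; exact: cvgP h.
Qed.

Variables (V : completeNormedModType R) (u : nat -> V) (C : R).
Hypothesis uC : forall k, `|u k.+1 - u k| <= C * q ^+ k.

Lemma halving_increments_dist k m : (k <= m)%N -> `|u m - u k| <= 2 * C * q ^+ k.
Proof.
have C0 : 0 <= C by have := le_trans (normr_ge0 _) (uC 0); rewrite expr0 mulr1.
suff tele j : `|u (k + j)%N - u k| <= 2 * C * q ^+ k - 2 * C * q ^+ (k + j).
  move/subnKC <-; apply: le_trans (tele _) _.
  by rewrite lerBlDr lerDl !mulr_ge0 // exprn_ge0 // q_ge0.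
elim: j => [|j IH]; first by rewrite addn0 !subrr normr0.
rewrite addnS -(subrKA (u (k + j)%N)); apply: le_trans (ler_normD _ _) _.
apply: le_trans (lerD (uC _) IH) _.
by rewrite exprS le_eqVlt; apply/orP; left; apply/eqP; field.
Qed.

Lemma halving_increments_cvg : cvgn u.
Proof.
have C0 : 0 <= C by have := le_trans (normr_ge0 _) (uC 0); rewrite expr0 mulr1.
have q1 : `|q| < 1 by rewrite ger0_norm ?q_ge0 // invf_lt1 // ltr1n.
rewrite (_ : u = fun k => u 0%N + series (telescope u) k); last first.
  by apply/funext => k; exact: eq_sum_telescope.
apply: is_cvgD; first exact: is_cvg_cst.
apply: normed_cvg; apply: (@series_le_cvg _ (fun k => `|telescope u k|) (geometric C q)).
- by move=> k; exact: normr_ge0.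
- by move=> k; rewrite /geometric /= mulr_ge0 // exprn_ge0 // q_ge0.
- exact: uC.
- exact: is_cvg_geometric_series.
Qed.

Lemma halving_increments_lim_dist k : `|limn u - u k| <= 2 * C * q ^+ k.
Proof.
apply: cvg_dist_le; first exact: halving_increments_cvg.
exists k => // m /= km.
exact: halving_increments_dist.
Qed.

End HalvingIncrements.

Lemma is_derive_row {R : realType} n (F : R -> 'rV[R]_n) (t : R) (d : 'rV[R]_n) :
  (forall j, is_derive t 1 (fun s => F s 0 j) (d 0 j)) -> is_derive t 1 F d.
Proof.
move=> Fd; have dF : derivable F t 1.
  apply/derivable_mxP => i j; rewrite (ord1 i).
  exact: (@ex_derive _ _ _ _ _ _ _ (Fd j)).
apply: DeriveDef => //; rewrite derive_mx //; apply/matrixP => i j.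
by rewrite mxE (ord1 i); exact: (@derive_val _ _ _ _ _ _ _ (Fd j)).
Qed.

Definition lipschitz_path {R : realType} (V : normedModType R) (z : R -> V) (K : R) :=
  forall s t, `|z s - z t| <= K * `|s - t|.

Section Picard.
Context {R : realType} (n : nat) (g : 'rV[R]_n -> 'rV[R]_n) (y : 'rV[R]_n) (L B T : R).
Hypotheses (T0 : 0 <= T) (L0 : 0 <= L) (TL : T * L <= 2^-1)
  (gL : forall a b, `|g a - g b| <= L * `|a - b|) (gB : forall a, `|g a| <= B).
Local Notation q := (2^-1 : R).

Let B0 : 0 <= B. Proof. exact: le_trans (normr_ge0 _) (gB 0). Qed.

(* The time is clamped to [0, T] so that every Picard iterate is defined, bounded and
   Lipschitz on the whole real line. *)
Definition picard (z : R -> 'rV[R]_n) (t : R) : 'rV[R]_n :=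
  y + \row_j primitive (fun s => g (z s) 0 j) (clamp 0 T t).

Lemma continuous_field_entry j z K : lipschitz_path z K ->
  continuous (fun s => g (z s) 0 j).
Proof.
move=> zK; apply: (@lipschitz_continuous _ R^o R^o _ (L * K)) => a b.
have -> : g (z a) 0 j - g (z b) 0 j = (g (z a) - g (z b)) 0 j by rewrite !mxE.
apply: le_trans (row_entry_le_normr _ j) _; apply: le_trans (gL _ _) _.
by rewrite -mulrA ler_wpM2l.
Qed.

Lemma field_entry_bound (z : R -> 'rV[R]_n) j s : `|g (z s) 0 j| <= B.
Proof. exact: le_trans (row_entry_le_normr _ j) (gB _). Qed.

Lemma picard0 z : picard z 0 = y.
Proof. by apply/rowP => j; rewrite !mxE clamp_id ?lexx // primitive0 addr0. Qed.

Lemma picard_lipschitz z K : lipschitz_path z K -> lipschitz_path (picard z) B.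
Proof.
move=> zK s t; apply: normr_row_le => [|j]; first by rewrite mulr_ge0.
rewrite !mxE (addrC (y 0 j)) addrKA.
have /andP[s0 _] := clamp_itv s T0; have /andP[t0 _] := clamp_itv t T0.
apply: le_trans (primitive_dist (continuous_field_entry (j := j) zK) (field_entry_bound z j) t0 s0) _.
rewrite distrC; apply: ler_wpM2l => //.
by rewrite (distrC s); exact: clamp_dist.
Qed.

Lemma picard_dist_center z K t : lipschitz_path z K -> `|picard z t - y| <= T * B.
Proof.
move=> zK; apply: normr_row_le => [|j]; first by rewrite mulr_ge0.
rewrite !mxE (addrC (y 0 j)) addrK -[primitive _ _]subr0.
rewrite -[in X in _ - X](primitive0 (fun s => g (z s) 0 j)).
have /andP[t0 tT] := clamp_itv t T0.
apply: le_trans (primitive_dist (continuous_field_entry (j := j) zK) (field_entry_bound z j) (lexx 0) t0) _.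
by rewrite subr0 ger0_norm // mulrC; exact: ler_wpM2r.
Qed.

Lemma picard_contraction z w Kz Kw E t : lipschitz_path z Kz -> lipschitz_path w Kw ->
  (forall s, `|z s - w s| <= E) -> `|picard z t - picard w t| <= T * L * E.
Proof.
move=> zK wK zwE; have E0 : 0 <= E := le_trans (normr_ge0 _) (zwE 0).
apply: normr_row_le => [|j]; first by rewrite !mulr_ge0.
have cz := continuous_field_entry (j := j) zK; have cw := continuous_field_entry (j := j) wK.
pose h s := g (z s) 0 j - g (w s) 0 j.
have ch : continuous h by move=> s; apply: cvgB; [exact: cz | exact: cw].
have hLE s : `|h s| <= L * E.
  have := row_entry_le_normr (g (z s) - g (w s)) j; rewrite !mxE => /le_trans -> //.
  by apply: le_trans (gL _ _) _; exact: ler_wpM2l (zwE s).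
have /andP[t0 tT] := clamp_itv t T0.
rewrite !mxE opprD addrACA subrr add0r -primitiveB //.
have := primitive_dist ch hLE (lexx 0) t0.
rewrite primitive0 !subr0 (ger0_norm t0) => /le_trans; apply.
by apply: le_trans (ler_wpM2l (mulr_ge0 L0 E0) tT) _; rewrite mulrC mulrA.
Qed.

Lemma picard_cst t : picard (cst y) t = y + clamp 0 T t *: g y.
Proof.
apply/rowP => j; rewrite !mxE; congr (_ + _).
rewrite (primitive_cst (g y 0 j)) 1?mulrC //.
by have /andP[] := clamp_itv t T0.
Qed.

Lemma is_derive_picard z K t : lipschitz_path z K -> 0 < t < T ->
  is_derive t 1 (picard z) (g (z t)).
Proof.
move=> zK /andP[t0 tT]; apply: is_derive_row => j.
have := is_deriveD (is_derive_cst (y 0 j) t 1)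
  (is_derive_primitive (continuous_field_entry (j := j) zK) t0).
rewrite add0r; apply: near_eq_is_derive.
near=> s; rewrite !mxE clamp_id //; apply/andP; split; apply: ltW.
  by near: s; exact: lt_nbhsr.
by near: s; exact: lt_nbhsl.
Unshelve. all: by end_near. Qed.

Definition picard_iter k := iter k picard (cst y).

Lemma lipschitz_cst_path : lipschitz_path (cst y) 0.
Proof. by move=> s t; rewrite subrr normr0 mul0r. Qed.

Lemma picard_iter_lipschitz k : lipschitz_path (picard_iter k) B.
Proof.
elim: k => [|k IH]; last exact: picard_lipschitz IH.
by move=> s t; rewrite subrr normr0 mulr_ge0.
Qed.

Lemma picard_iter_step k t : `|picard_iter k.+1 t - picard_iter k t| <= T * B * q ^+ k.
Proof.
elim: k t => [|k IH] t.
  by rewrite expr0 mulr1; exact: picard_dist_center lipschitz_cst_path.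
have X0 : 0 <= T * B * q ^+ k by rewrite !mulr_ge0 // exprn_ge0 // invr_ge0.
apply: le_trans (picard_contraction t (picard_iter_lipschitz _) (picard_iter_lipschitz _) IH) _.
by rewrite exprS [leRHS]mulrCA; exact: (ler_wpM2r X0 TL).
Qed.

Definition picard_fix t := limn (fun k => picard_iter k t).

Lemma picard_iter_cvg t : (fun k => picard_iter k t) @ \oo --> picard_fix t.
Proof. exact: halving_increments_cvg (fun k => picard_iter_step k t). Qed.

Lemma picard_fix_dist t k : `|picard_fix t - picard_iter k t| <= 2 * (T * B) * q ^+ k.
Proof. exact: halving_increments_lim_dist (fun k => picard_iter_step k t) k. Qed.

Lemma picard_fix_lipschitz : lipschitz_path picard_fix B.
Proof.
move=> s t; rewrite -[_ - picard_fix t]subr0.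
apply: (@cvg_dist_le _ _ (fun k => picard_iter k s - picard_iter k t)).
  by apply: cvgB; exact: picard_iter_cvg.
by apply: nearW => k; rewrite subr0; exact: picard_iter_lipschitz.
Qed.

Lemma picard_fixE : picard picard_fix = picard_fix.
Proof.
apply/funext => t; apply/eqP; rewrite -subr_eq0 -normr_le0.
apply: (@le0_geometric_half _ _ (2 * (T * B))) => k.
rewrite -(subrKA (picard_iter k.+1 t)); apply: le_trans (ler_normD _ _) _.
have close := picard_contraction t picard_fix_lipschitz (picard_iter_lipschitz k)
  (fun s => picard_fix_dist s k).
have := picard_fix_dist t k.+1; rewrite distrC => close'.
apply: le_trans (lerD close close') _.
have X0 : 0 <= 2 * (T * B) * q ^+ k by rewrite !mulr_ge0 // exprn_ge0 // invr_ge0.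
have := ler_wpM2r X0 TL.
rewrite exprS (_ : 2 * (T * B) * (q * q ^+ k) = q * (2 * (T * B) * q ^+ k)); last by ring.
lra.
Qed.

Lemma picard_solution : exists z : R -> 'rV[R]_n,
  [/\ z 0 = y, continuous z, forall t, 0 < t < T -> is_derive t 1 z (g (z t)),
      forall t, `|z t - y| <= T * B & `|z T - y - T *: g y| <= T * L * (T * B)].
Proof.
have dist_center t : `|picard_fix t - y| <= T * B.
  by rewrite -picard_fixE; exact: picard_dist_center picard_fix_lipschitz.
exists picard_fix; split => //.
- by rewrite -picard_fixE picard0.
- exact: lipschitz_continuous picard_fix_lipschitz.
- by move=> t tT; rewrite -{1}picard_fixE; exact: is_derive_picard picard_fix_lipschitz tT.
have -> : picard_fix T - y - T *: g y = picard picard_fix T - picard (cst y) T.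
  by rewrite picard_cst clamp_id ?lexx ?T0 // picard_fixE opprD addrA.
exact: picard_contraction T picard_fix_lipschitz lipschitz_cst_path dist_center.
Qed.

End Picard.

Section BoxProjection.
Context {R : realType} (n : nat) (y : 'rV[R]_n) (r : R).
Hypothesis r0 : 0 <= r.

Definition box_proj (w : 'rV[R]_n) : 'rV[R]_n :=
  \row_j clamp (y 0 j - r) (y 0 j + r) (w 0 j).

Let box_side j : y 0 j - r <= y 0 j + r.
Proof. have := r0; lra. Qed.

Lemma box_proj_dist w1 w2 : `|box_proj w1 - box_proj w2| <= `|w1 - w2|.
Proof.
apply: normr_row_le => // j; rewrite !mxE.
apply: le_trans (clamp_dist _ _ (box_side j)) _.
by have := row_entry_le_normr (w1 - w2) j; rewrite !mxE.
Qed.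

Lemma box_proj_mem w : `|box_proj w - y| <= r.
Proof.
apply: normr_row_le => // j; rewrite !mxE ler_distl.
exact: clamp_itv (w 0 j) (box_side j).
Qed.

Lemma box_projE w : `|w - y| <= r -> box_proj w = w.
Proof.
move=> wy; apply/rowP => j; rewrite mxE clamp_id //.
by have := le_trans (row_entry_le_normr (w - y) j) wy; rewrite !mxE ler_distl.
Qed.

End BoxProjection.

Lemma ode_sol_euler_error {R : realType} (n m : nat)
    (f : 'rV[R]_n -> 'rV[R]_m -> 'rV[R]_n) (u : 'rV[R]_m) (y : 'rV[R]_n) (r L B T : R) :
  0 <= r -> 0 <= L -> 0 <= T -> T * L <= 2^-1 -> T * B <= r ->
  (forall a b, `|a - y| <= r -> `|b - y| <= r -> `|f a u - f b u| <= L * `|a - b|) ->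
  (forall a, `|a - y| <= r -> `|f a u| <= B) ->
  exists2 z, ode_sol f y u T z & `|z T - y - T *: f y u| <= T * L * (T * B).
Proof.
move=> r0 L0 T0 TL TBr fL fB.
pose g w := f (box_proj y r w) u.
have gL a b : `|g a - g b| <= L * `|a - b|.
  apply: le_trans (fL _ _ (box_proj_mem _ r0 _) (box_proj_mem _ r0 _)) _.
  by apply: ler_wpM2l => //; exact: box_proj_dist.
have gB a : `|g a| <= B := fB _ (box_proj_mem _ r0 _).
have [z [z0 zc zd zy zT]] := picard_solution y T0 L0 TL gL gB.
have gz t : g (z t) = f (z t) u by rewrite /g box_projE // (le_trans (zy t)).
have gy : g y = f y u by rewrite /g box_projE // subrr normr0.
exists z; last by rewrite -gy.
split=> //; split; first exact: continuous_subspaceT.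
by move=> t t0 tT; rewrite -gz; apply: zd; rewrite t0 tT.
Qed.

Lemma euler_step_lipschitz {R : realType} n (x y fx fy : 'rV[R]_n) (T K : R) :
  0 <= T -> enorm (fx - fy) <= K * enorm (x - y) ->
  enorm (x + T *: fx - (y + T *: fy)) <= (1 + K * T) * enorm (x - y).
Proof.
move=> T0 fK; rewrite opprD addrACA -scalerBr.
apply: le_trans (enormD _ _) _; rewrite enormZ ger0_norm //.
by rewrite mulrDl mul1r lerD2l [K * T]mulrC -mulrA ler_wpM2l.
Qed.

Lemma class_Kinf_linear {R : realType} (s : R) : 0 < s -> class_Kinf (fun t => s * t).
Proof.
move=> s0; split; [|split; [|split]].
- apply: continuous_subspaceT; apply: (@lipschitz_continuous _ R^o R^o _ s) => a b.
  by rewrite -mulrBr normrM gtr0_norm.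
- by rewrite mulr0.
- by move=> a b _ ab; rewrite ltr_pM2l.
- move=> t; exists ((`|t| + 1) / s); split; first by rewrite divr_ge0 ?addr_ge0 // ltW.
  by rewrite mulrC divfK ?gt_eqF //; have := ler_norm t; lra.
Qed.

Section ExactFlowEulerError.
Context {R : realType} (n m : nat) (f : 'rV[R]_n -> 'rV[R]_m -> 'rV[R]_n).
Local Notation c := (n.+1%:R : R).

Lemma exact_map_euler_error Fe (y : 'rV[R]_n) (u : 'rV[R]_m) (Mx Mu L Ku T : R) :
  exact_map f Fe -> f 0 0 = 0 ->
  (forall a b v w, enorm a <= Mx -> enorm b <= Mx -> enorm v <= Mu -> enorm w <= Mu ->
     enorm (f a v - f b w) <= L * (enorm (a - b) + enorm (v - w))) ->
  2 * c * enorm y <= Mx -> enorm u <= Mu -> enorm u <= Ku * enorm y ->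
  0 <= L -> 0 <= Ku -> 0 <= T -> T * (L * (2 * c + Ku)) <= 2^-1 ->
  enorm (y + T *: f y u - Fe y u T) <= T * (c * (L * c) * (L * (2 * c + Ku)) * T) * enorm y.
Proof.
move=> Fe_exact f00 fL yMx uMu uy L0 Ku0 T0 TA.
set r := enorm y; set A := L * (2 * c + Ku).
have r0 : 0 <= r := enorm_ge0 y.
have c1 : 1 <= c by rewrite ler1n.
have c0 : 0 <= c := le_trans ler01 c1.
have Mx0 : enorm (0 : 'rV[R]_n) <= Mx by rewrite enorm0 (le_trans _ yMx) // !mulr_ge0.
have Mu0 : enorm (0 : 'rV[R]_m) <= Mu by rewrite enorm0 (le_trans (enorm_ge0 u)).
(* points of the box of radius [|y|] around [y] stay in the ball where [f] is Lipschitz *)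
have box_enorm a : `|a - y| <= r -> enorm a <= 2 * c * r.
  move=> ay; apply: le_trans (enorm_le_normr a) _; rewrite [2 * c]mulrC -mulrA ler_wpM2l //.
  have := ler_normD (a - y) y; rewrite subrK; have := normr_le_enorm y; rewrite -/r; lra.
have box_ball a (ay : `|a - y| <= r) : enorm a <= Mx := le_trans (box_enorm a ay) yMx.
have fLip a b : `|a - y| <= r -> `|b - y| <= r -> `|f a u - f b u| <= L * c * `|a - b|.
  move=> ay b_y; apply: le_trans (normr_le_enorm _) _.
  apply: le_trans (fL _ _ _ _ (box_ball _ ay) (box_ball _ b_y) uMu uMu) _.
  rewrite subrr enorm0 addr0 -mulrA ler_wpM2l //; exact: enorm_le_normr.
have fB a : `|a - y| <= r -> `|f a u| <= A * r.
  move=> ay; apply: le_trans (normr_le_enorm _) _.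
  have := fL a 0 u 0 (box_ball _ ay) Mx0 uMu Mu0; rewrite f00 !subr0 => /le_trans -> //.
  by rewrite /A -mulrA ler_wpM2l // mulrDl lerD // box_enorm.
have TLc : T * (L * c) <= 2^-1.
  by apply: le_trans TA; apply: (ler_wpM2l T0); apply: (ler_wpM2l L0); lra.
have TBr : T * (A * r) <= r.
  by rewrite mulrA -[leRHS]mul1r; apply: ler_wpM2r => //; rewrite /A; lra.
have [z ode zT] := ode_sol_euler_error r0 (mulr_ge0 L0 c0) T0 TLc TBr fLip fB.
rewrite (Fe_exact _ _ _ _ T0 ode) -enormN opprB opprD addrA.
apply: le_trans (enorm_le_normr _) _; apply: le_trans (ler_wpM2l c0 zT) _.
by rewrite le_eqVlt; apply/orP; left; apply/eqP; ring.
Qed.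

End ExactFlowEulerError.

Theorem lemma2 (R : realType) (n m : nat)
  (f : 'rV[R]_n -> 'rV[R]_m -> 'rV[R]_n) (uc : 'rV[R]_n -> 'rV[R]_m)
  (U : 'rV[R]_n -> R -> 'rV[R]_m) (Fe : 'rV[R]_n -> 'rV[R]_m -> R -> 'rV[R]_n) :
  assumption1 f -> assumption2 uc -> StL U -> exact_map f Fe ->
  EPC (FbarE f U) (Fbare Fe U).
Proof.
move=> [f00 f_lip] _ [K [Ts [_ U_stl]]] Fe_exact M M0.
have [KM0 [TsM0 U_lip]] := U_stl M M0.
pose c : R := n.+1%:R; have c1 : 1 <= c by rewrite ler1n.
have Mx0 : 0 <= 2 * c * M by rewrite !mulr_ge0 //; lra.
have [L [L0 fL]] := f_lip _ _ Mx0 (mulr_ge0 (ltW KM0) M0).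
pose A := L * (2 * c + K M); have A0 : 0 < A by rewrite mulr_gt0 //; lra.
exists (L * (1 + K M)), (Num.min (Ts M) (2^-1 / A)), (fun t => c * (L * c) * A * t).
split; first by rewrite mulr_gt0 // addr_gt0.
split; first by rewrite lt_min TsM0 divr_gt0.
split; first by apply: class_Kinf_linear; rewrite !mulr_gt0 //; lra.
move=> x y T xM yM T0; rewrite lt_min ltr_pdivlMr // => /andP[TTs TA].
have [U0 U_T] := U_lip T (ltW T0) TTs.
have U_le v : enorm v <= M -> enorm (U v T) <= K M * enorm v.
  have e0M : enorm (0 : 'rV[R]_n) <= M by rewrite enorm0.
  by move=> vM; have := U_T v 0 vM e0M; rewrite U0 !subr0.
have U_M v : enorm v <= M -> enorm (U v T) <= K M * M.
  by move=> vM; apply: le_trans (U_le v vM) _; apply: ler_wpM2l => //; exact: ltW.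
have M_le (v : 'rV[R]_n) : enorm v <= M -> enorm v <= 2 * c * M.
  by move=> vM; apply: le_trans vM _; rewrite -[leLHS]mul1r; apply: ler_wpM2r => //; lra.
rewrite /FbarE /Fbare -(subrKA (y + T *: f y (U y T))).
apply: le_trans (enormD _ _) (lerD _ _).
- apply: euler_step_lipschitz (ltW T0) _.
  apply: le_trans (fL _ _ _ _ (M_le _ xM) (M_le _ yM) (U_M _ xM) (U_M _ yM)) _.
  rewrite -mulrA; apply: ler_wpM2l; first exact: ltW.
  by rewrite mulrDl mul1r lerD2l U_T.
- apply: le_trans (exact_map_euler_error Fe_exact f00 fL _ (U_M _ yM) (U_le _ yM)
    (ltW L0) (ltW KM0) (ltW T0) (ltW TA)) _.
    by apply: ler_wpM2l => //; rewrite mulr_ge0 //; lra.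
  apply: ler_wpM2l; first by rewrite !mulr_ge0 ?ltW //; lra.
  by rewrite le_max lexx orbT.
Qed.
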